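(* Let $p$ be a prime, $m$ a positive integer, $q=p^m$ and $n=q-1$. For any integer $e$ with $1 \le e \le n-1$ and $\gcd(e, q-1)=2$, the size $\ell_e$ of the $p$-cyclotomic coset $C_e$ modulo $n$ is equal to $m$.
   Context: For $j\in\mathbb{Z}_n=\{0,1,\dots,n-1\}$, the $p$-cyclotomic coset modulo $n$ containing $j$ is $C_j=\{j, pj, p^2j,\dots,p^{\ell_j-1}j\}$ (computed modulo $n$), where $\ell_j$ is the smallest positive integer with $p^{\ell_j}j\equiv j \pmod n$; $\ell_j=|C_j|$ is called the size of $C_j$. *)

From mathcomp Require Import all_boot.

Definition is_cyclotomic_coset_size (p n j l : nat) : Prop :=
  [/\ 0 < l, p ^ l * j = j %[mod n]
    & forall k, 0 < k -> p ^ k * j = j %[mod n] -> l <= k].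

(* If [p^k e = e] modulo [n = p^m - 1] and [gcd(e, n) = 2], then [n/2] divides
   [p^k - 1]; but for [0 < k < m] we have [0 < 2 (p^k - 1) < n], so no such [k]
   exists, while [p^m = 1] modulo [n] makes [m] itself a period. *)
From mathcomp Require Import all_boot.
From mathcomp Require Import zify.

Lemma coprime_div_gcd n e :
  0 < gcdn n e -> coprime (n %/ gcdn n e) (e %/ gcdn n e).
Proof.
move=> g_gt0; rewrite /coprime -(eqn_pmul2r g_gt0) mul1n.
by rewrite muln_gcdl !divnK ?dvdn_gcdl ?dvdn_gcdr.
Qed.

Lemma dvdn_div_gcd_of_dvdn_mul n e a :
  0 < gcdn n e -> n %| a * e -> n %/ gcdn n e %| a.
Proof.
move=> g_gt0 n_dvd_ae.
rewrite -(Gauss_dvdl _ (coprime_div_gcd _ _ g_gt0)) -(dvdn_pmul2r g_gt0).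
by rewrite -mulnA !divnK ?dvdn_gcdl ?dvdn_gcdr.
Qed.

Lemma dvdn_predM_of_eq_mod x e n : x * e = e %[mod n] -> n %| x.-1 * e.
Proof.
case: x => [|x] fix_e; first by rewrite mul0n dvdn0.
by rewrite -subn1 mulnBl mul1n -eqn_mod_dvd ?leq_pmull // fix_e.
Qed.

Lemma eq_mod_pred_mulnl q e : 0 < q -> q * e = e %[mod q.-1].
Proof. by case: q => // q _; rewrite mulSn addnC mulnC modnMDl. Qed.

Lemma double_pred_expn_lt p k m :
  1 < p -> k < m -> (p ^ k).-1.*2 < (p ^ m).-1.
Proof.
move=> p_gt1 lt_km.
have pk_gt0 : 0 < p ^ k by rewrite expn_gt0 (ltnW p_gt1).
have : p * p ^ k <= p ^ m by rewrite -expnS leq_exp2l.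
have : 2 * p ^ k <= p * p ^ k by rewrite leq_mul2r p_gt1 orbT.
lia.
Qed.

Theorem lemma1 (p m e : nat) :
  prime p -> 0 < m ->
  let q := p ^ m in let n := q - 1 in
  1 <= e <= n - 1 -> gcdn e (q - 1) = 2 ->
  is_cyclotomic_coset_size p n e m.
Proof.
move=> p_pr m_gt0 q n _ gcd_e_n.
have p_gt1 := prime_gt1 p_pr.
have q_gt0 : 0 < q by rewrite expn_gt0 ltnW.
have n_pred : n = q.-1 by rewrite /n subn1.
split=> // [|k k_gt0 fix_e]; first by rewrite n_pred eq_mod_pred_mulnl.
rewrite leqNgt; apply/negP => lt_km.
have gcd_n_e : gcdn n e = 2 by rewrite gcdnC.
have half_dvd : n %/ 2 %| (p ^ k).-1.
  by rewrite -gcd_n_e dvdn_div_gcd_of_dvdn_mul ?gcd_n_e ?dvdn_predM_of_eq_mod.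
have pk_gt1 : 1 < p ^ k by rewrite -(expn0 p) ltn_exp2l.
have n_even : n %/ 2 * 2 = n by rewrite divnK // -gcd_n_e dvdn_gcdl.
have := dvdn_leq _ half_dvd; have := double_pred_expn_lt _ _ _ p_gt1 lt_km.
rewrite -/q -n_pred; lia.
Qed.
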